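(* Let $\mathsf{Prop}=\{p\}$, $\mathsf{Act}=\{a,b,c,d,e\}$, $\mathsf{Op}_{[\cdot]}=\{[\alpha]:\alpha\in\mathsf{Act}\}$ and $\mathsf{Op}_{\langle\cdot\rangle}=\{\langle\alpha\rangle^{\ge1}:\alpha\in\mathsf{Act}\}$. Let $\mathsf{L}'$ be a monotone fragment of $\mathsf{ML}(\mathsf{Prop},\mathsf{Act})$ with operator set $\mathsf{Op}'$ containing $p$, such that: $\langle\alpha\rangle^{\ge k}\notin\mathsf{Op}'$ for all $k\ge2$ and $\alpha\in\mathsf{Act}$; $\mathsf{Op}_{[\cdot]}\subseteq\mathsf{Op}'$ or $\mathsf{Op}_{\langle\cdot\rangle}\subseteq\mathsf{Op}'$; $\wedge\in\mathsf{Op}'$ implies $\mathsf{Op}_{[\cdot]}\subseteq\mathsf{Op}'$; and $\vee\in\mathsf{Op}'$ implies $\mathsf{Op}_{\langle\cdot\rangle}\subseteq\mathsf{Op}'$. Then for every $n\in\mathbb{N}$ there is a sample $\mathcal{S}=(\mathcal{P},\mathcal{N})$ of Kripke structures in $\mathcal{K}(\mathsf{Prop},\mathsf{Act})$ such that $k:=\sum_{K\in\mathcal{P}\cup\mathcal{N}}|Q_K|\ge n$ and the minimal size of an $\mathcal{S}$-separating $\mathsf{L}'$-formula is at least $2^{k/25}$.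
   Context: $\mathsf{ML}(\mathsf{Prop},\mathsf{Act})$-formulas: $\varphi::=q\mid\neg\varphi\mid\varphi\vee\varphi\mid\varphi\wedge\varphi\mid\langle\alpha\rangle^{\ge k}\varphi\mid[\alpha]\varphi$ with $q\in\mathsf{Prop}$, $\alpha\in\mathsf{Act}$, $k\ge1$. A fragment is given by a subset $\mathsf{Op}'$ of these operators (propositions, $\neg,\vee,\wedge$, each $\langle\alpha\rangle^{\ge k}$, each $[\alpha]$), its formulas being those using only operators of $\mathsf{Op}'$; it is monotone if $\neg\notin\mathsf{Op}'$ and at most one of $\vee,\wedge$ is in $\mathsf{Op}'$. $\mathsf{sz}(\varphi)$ is the number of distinct subformulas. $\mathcal{K}(\mathsf{Prop},\mathsf{Act})$: Kripke structures $K=(Q,I,A,\delta,P,\pi)$ with $Q=Q_K$ a finite non-empty set of states, $I\subseteq Q$ non-empty, $A\subseteq\mathsf{Act}$ non-empty, $\delta:Q\times A\to 2^Q$ (take $\delta(q,\alpha)=\emptyset$ for $\alpha\notin A$), $P\subseteq\mathsf{Prop}$, $\pi:Q\to 2^P$. Semantics at states: $q\models r$ iff $r\in\pi(q)$; Boolean connectives as usual; $q\models[\alpha]\varphi$ iff $\delta(q,\alpha)\subseteq\{q':q'\models\varphi\}$; $q\models\langle\alpha\rangle^{\ge k}\varphi$ iff $|\delta(q,\alpha)\cap\{q':q'\models\varphi\}|\ge k$. $K\models\varphi$ iff $q\models\varphi$ for all $q\in I$. A formula is $\mathcal{S}$-separating if satisfied by all structures in $\mathcal{P}$ and by none in $\mathcal{N}$.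 *)

From HB Require Import structures.
From Stdlib Require Import List.
From mathcomp Require Import all_boot.
Set Implicit Arguments. Unset Strict Implicit. Unset Printing Implicit Defensive.

Section Formulas.
Variables (Prp Act : eqType).

(* FDia al k f  is  <al>^{>= k} f  (only k >= 1 is used in fragments, see
   valid_op). *)
Inductive form : Type :=
| FProp of Prp
| FNeg of form
| FOr of form & form
| FAnd of form & form
| FDia of Act & nat & form
| FBox of Act & form.

Definition form_eq_dec : comparable form.
Proof.
rewrite /comparable /decidable; decide equality;
  try exact: (eq_comparable _ _); try exact: (eq_comparable nat).
Defined.

HB.instance Definition _ := hasDecEq.Build form (compareP form_eq_dec).

Inductive op : Type :=
| OProp of Prp
| ONeg
| OOr
| OAnd
| ODia of Act & nat
| OBox of Act.

Definition valid_op (o : op) : Prop :=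
  match o with ODia _ k => 1 <= k | _ => True end.

Definition fragment := op -> Prop.

Fixpoint in_frag (Op' : fragment) (f : form) : Prop :=
  match f with
  | FProp r => Op' (OProp r)
  | FNeg g => Op' ONeg /\ in_frag Op' g
  | FOr g h => Op' OOr /\ in_frag Op' g /\ in_frag Op' h
  | FAnd g h => Op' OAnd /\ in_frag Op' g /\ in_frag Op' h
  | FDia al k g => Op' (ODia al k) /\ in_frag Op' g
  | FBox al g => Op' (OBox al) /\ in_frag Op' g
  end.

Definition monotone (Op' : fragment) : Prop :=
  ~ Op' ONeg /\ ~ (Op' OOr /\ Op' OAnd).

Fixpoint subf (f : form) : seq form :=
  f :: match f with
       | FProp _ => [::]
       | FNeg g => subf g
       | FOr g h => subf g ++ subf h
       | FAnd g h => subf g ++ subf h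
       | FDia _ _ g => subf g
       | FBox _ g => subf g
       end.

Definition sz (f : form) : nat := size (undup (subf f)).

(* The state set Q is represented as 'I_nst (any finite non-empty set up to
   renaming). *)
Record kripke : Type := Kripke {
  nst : nat;
  nst_pos : 0 < nst;
  init : {set 'I_nst};
  init_ne : init != set0;
  acts : pred Act;
  acts_ne : exists al, acts al;
  delta : 'I_nst -> Act -> {set 'I_nst};
  delta_out : forall q al, ~~ acts al -> delta q al = set0;
  props : pred Prp;
  lab : 'I_nst -> pred Prp;
  lab_sub : forall q r, lab q r -> props r
}.

Fixpoint sat (K : kripke) (q : 'I_(nst K)) (f : form) {struct f} : bool :=
  match f with
  | FProp r => lab q r
  | FNeg g => ~~ sat q g
  | FOr g h => sat q g || sat q h
  | FAnd g h => sat q g && sat q h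
  | FDia al k g => k <= #|delta q al :&: [set q' | sat q' g]|
  | FBox al g => delta q al \subset [set q' | sat q' g]
  end.

Definition models (K : kripke) (f : form) : Prop :=
  forall q, q \in init K -> sat q f.

Definition separating (Pos Neg : seq kripke) (f : form) : Prop :=
  (forall K, In K Pos -> models K f) /\ (forall K, In K Neg -> ~ models K f).

Definition total_states (s : seq kripke) : nat := sumn (map nst s).

End Formulas.

(* Prop = {p} : unit (p = tt);  Act = {a,b,c,d,e} *)
Inductive act5 : Type := a_ | b_ | c_ | d_ | e_.

Definition act5_eq_dec : comparable act5.
Proof. rewrite /comparable /decidable; decide equality. Defined.
HB.instance Definition _ := hasDecEq.Build act5 (compareP act5_eq_dec).

From Stdlib Require Import List Classical.
From mathcomp Require Import all_boot zify.
Set Implicit Arguments. Unset Strict Implicit. Unset Printing Implicit Defensive.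

(* The lower bound comes from a binary counter.  Tokens 0..n of a deterministic
   automaton start at positions n..2n with bit 0; letters c and d shift all
   tokens by one position, and b is legal only when every token left of
   position n carries 1 and the token at position n carries 0, which b then
   clears and sets respectively.  Reading the bits as a binary number, b adds
   one and the other letters add nothing, so setting all n+1 bits takes at
   least 2^(n+1) - 1 letters; the ruler word does it.
   Embed the automaton in a Kripke structure.  A monotone fragment either has
   no disjunction and all boxes, or no conjunction and all diamonds of grade 1.
   In the first case a formula true at all initial tokens, and in the second a
   formula false at a root whose successors are the initial tokens, can be
   followed along one branch of its syntax tree; on deterministic states this
   yields a word, no longer than the height of the formula, after which every
   token agrees on p.  So the formula has at least 2^(n+1) subformulas, while
   the sample has 4n + 6 states. *)

Lemma card_set1I (T : finType) (a : T) (X : {set T}) : #|[set a] :&: X| = (a \in X).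
Proof.
have [aX | aNX] := boolP (a \in X); first by rewrite (setIidPl _) ?cards1 ?sub1set.
by apply/eqP; rewrite cards_eq0 setI_eq0 disjoints1.
Qed.

Lemma set1_neq0 (T : finType) (a : T) : [set a] != set0.
Proof. by apply/set0Pn; exists a; rewrite set11. Qed.

Section Height.
Variables (Prp Act : eqType).

Fixpoint height (f : form Prp Act) : nat :=
  match f with
  | FProp _ => 0
  | FNeg g | FDia _ _ g | FBox _ g => (height g).+1
  | FOr g h | FAnd g h => (maxn (height g) (height h)).+1
  end.

Lemma height_subf f j : j <= height f -> j \in map height (subf f).
Proof.
elim: f j => [r|g IH|g IHg h IHh|g IHg h IHh|al k g IH|al g IH] j;
  rewrite /= in_cons leq_eqVlt => /orP [-> // | ]; rewrite ?ltnS ?leq_max ?map_cat ?mem_cat //.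
- by move=> /IH ->; rewrite orbT.
- by case/orP => [/IHg | /IHh] ->; rewrite !orbT.
- by case/orP => [/IHg | /IHh] ->; rewrite !orbT.
- by move=> /IH ->; rewrite orbT.
- by move=> /IH ->; rewrite orbT.
Qed.

Lemma height_lt_sz f : height f < sz f.
Proof.
rewrite /sz -(size_map height) -[(height f).+1](size_iota 0).
apply: uniq_leq_size (iota_uniq _ _) _ => j; rewrite mem_iota add0n ltnS => /height_subf.
by case/mapP => g g_in ->; rewrite map_f ?mem_undup.
Qed.

End Height.

Section Semantics.
Variables (Prp Act : eqType) (Op' : fragment Prp Act).
Hypothesis Op'_valid : forall o, Op' o -> valid_op o.
Hypothesis Op'_no_neg : ~ Op' (ONeg Prp Act).

Definition box_chain (r : Prp) (w : seq Act) : form Prp Act :=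
  foldr (fun al g => FBox al g) (FProp Act r) w.

Definition dia_chain (r : Prp) (w : seq Act) : form Prp Act :=
  foldr (fun al g => FDia al 1 g) (FProp Act r) w.

Lemma box_chain_frag r w :
  Op' (OProp Act r) -> (forall al, Op' (OBox Prp al)) -> in_frag Op' (box_chain r w).
Proof. by move=> r_in box_in; elim: w => //= al w ->. Qed.

Lemma dia_chain_frag r w :
  Op' (OProp Act r) -> (forall al, Op' (ODia Prp al 1)) -> in_frag Op' (dia_chain r w).
Proof. by move=> r_in dia_in; elim: w => //= al w ->. Qed.

Lemma sat_dia_chain_loop (K : kripke Prp Act) (q : 'I_(nst K)) r w :
  (forall al, q \in delta q al) -> lab q r -> sat q (dia_chain r w).
Proof.
move=> loop lab_q; elim: w => //= al w IH.
by rewrite card_gt0; apply/set0Pn; exists q; rewrite !inE loop IH.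
Qed.

Lemma sat_null (K : kripke Prp Act) (q : 'I_(nst K)) f :
  (forall al, delta q al = [set q]) -> (forall r, ~~ lab q r) ->
  in_frag Op' f -> ~~ sat q f.
Proof.
move=> loop unlabelled; elim: f => [r|g _|g IHg h IHh|g IHg h IHh|al k g IH|al g IH] /=.
- by move=> _; apply: unlabelled.
- by case.
- by case=> _ [/IHg/negbTE -> /IHh/negbTE ->].
- by case=> _ [/IHg/negbTE -> _].
- by case=> /Op'_valid k_gt0 /IH/negbTE g_q; rewrite loop card_set1I inE g_q -ltnNge.
- by case=> _ /IH/negbTE g_q; rewrite loop sub1set inE g_q.
Qed.

Section Deterministic.
Variables (K : kripke Prp Act) (next : 'I_(nst K) -> Act -> 'I_(nst K)).
Variable D : pred 'I_(nst K).
Hypothesis delta_next : forall q al, D q -> delta q al = [set next q al].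
Hypothesis D_next : forall q al, D q -> D (next q al).

Lemma sat_dia_next q al k g : D q -> sat q (FDia al k g) = (k <= sat (next q al) g).
Proof. by move=> Dq; rewrite /= delta_next // card_set1I inE. Qed.

Lemma sat_box_next q al g : D q -> sat q (FBox al g) = sat (next q al) g.
Proof. by move=> Dq; rewrite /= delta_next // sub1set inE. Qed.

Lemma sat_box_chain q r w : D q -> sat q (box_chain r w) = lab (foldl next q w) r.
Proof. by elim: w q => //= al w IH q Dq; rewrite -IH ?D_next // -sat_box_next. Qed.

Lemma sat_dia_chain q r w : D q -> sat q (dia_chain r w) = lab (foldl next q w) r.
Proof.
elim: w q => //= al w IH q Dq.
by rewrite delta_next // card_set1I inE IH ?D_next //; case: lab.
Qed.

Definition steerable (S : {set 'I_(nst K)}) (m : nat) (b : bool) : Prop :=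
  exists2 w : seq Act, size w <= m & exists r, {in S, forall q, lab (foldl next q w) r = b}.

Lemma steerable_leq (S : {set 'I_(nst K)}) m m' b :
  steerable S m b -> m <= m' -> steerable S m' b.
Proof. by move=> [w size_w lab_w] le_m; exists w => //; apply: leq_trans le_m. Qed.

Lemma steerable_next (S : {set 'I_(nst K)}) al m b :
  steerable (next^~ al @: S) m b -> steerable S m.+1 b.
Proof.
move=> [w size_w [r lab_w]]; exists (al :: w) => //.
by exists r => q q_S; apply: lab_w; apply: imset_f.
Qed.

Lemma next_image_sub (S : {set 'I_(nst K)}) al :
  {subset S <= D} -> {subset next^~ al @: S <= D}.
Proof. by move=> SD _ /imsetP [q /SD Dq ->]; apply: D_next. Qed.

Lemma dia_value (b s : bool) k : 0 < k -> (~~ b -> k < 2) -> (k <= s) = b -> s = b.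
Proof.
move=> k_gt0; case: b => [_ | /(_ isT) k_lt2]; case: s => //=.
  by rewrite leqNgt k_gt0.
by rewrite -ltnS k_lt2.
Qed.

(* Without Or (for b = true) or And (for b = false) only one branch of the
   formula matters, and a modality moves every state of S along the same action. *)
Lemma uniform_steerable b f (S : {set 'I_(nst K)}) :
  ~ Op' (if b then OOr Prp Act else OAnd Prp Act) ->
  (~~ b -> forall al k, 2 <= k -> ~ Op' (ODia Prp al k)) ->
  in_frag Op' f -> {subset S <= D} -> {in S, forall q, sat q f = b} ->
  steerable S (height f) b.
Proof.
move=> no_dual no_dia2.
elim: f S => [r|g _|g IHg h IHh|g IHg h IHh|al k g IH|al g IH] S /=.
- by move=> _ _ sat_S; exists [::] => //; exists r.
- by case.
- case=> or_in [g_in _] SD sat_S.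
  have b_false : b = false by move: no_dual; case: ifP => // _ /(_ or_in).
  apply: steerable_leq (IHg S g_in SD _) (leqW (leq_maxl _ _)).
  by move=> q /sat_S; rewrite b_false => /negbT /norP [/negbTE].
- case=> and_in [g_in _] SD sat_S.
  have b_true : b = true by move: no_dual; case: ifP => // _ /(_ and_in).
  apply: steerable_leq (IHg S g_in SD _) (leqW (leq_maxl _ _)).
  by move=> q /sat_S; rewrite b_true => /andP [].
- case=> dia_in g_in SD sat_S; apply: steerable_next (IH _ g_in (@next_image_sub _ al SD) _).
  move=> _ /imsetP [q q_S ->]; apply: (dia_value (Op'_valid dia_in)).
    by move=> /no_dia2 /(_ al k) dia2; rewrite ltnNge; apply/negP => /dia2; apply.
  by rewrite -sat_dia_next; [apply: sat_S | apply: SD].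
- case=> _ g_in SD sat_S; apply: steerable_next (IH _ g_in (@next_image_sub _ al SD) _).
  by move=> _ /imsetP [q q_S ->]; rewrite -sat_box_next; [apply: sat_S | apply: SD].
Qed.

Lemma root_steerable (K' : kripke Prp Act) (r1 t1 : 'I_(nst K')) (r2 : 'I_(nst K))
    (S : {set 'I_(nst K)}) f :
  ~ Op' (OAnd Prp Act) -> (forall al k, 2 <= k -> ~ Op' (ODia Prp al k)) ->
  (forall al, t1 \in delta r1 al) -> (forall al, delta t1 al = [set t1]) ->
  (forall r, ~~ lab t1 r) -> (forall r, lab r1 r -> lab r2 r) ->
  (forall al, delta r2 al = S) -> {subset S <= D} ->
  in_frag Op' f -> sat r1 f -> ~~ sat r2 f -> steerable S (height f) false.
Proof.
move=> no_and no_dia2 r1_t1 t1_loop t1_unlab lab_r12 r2_S SD.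
elim: f => [r|g _|g IHg h IHh|g _ h _|al k g _|al g _] /=.
- by move=> _ /lab_r12 ->.
- by case.
- case=> _ [g_in h_in] /orP [g_r1 | h_r1]; rewrite negb_or => /andP [g_r2 h_r2].
    exact: steerable_leq (IHg g_in g_r1 g_r2) (leqW (leq_maxl _ _)).
  exact: steerable_leq (IHh h_in h_r1 h_r2) (leqW (leq_maxr _ _)).
- by case=> /no_and.
- case=> dia_in g_in _; rewrite r2_S => dia_r2.
  have k_lt2 : k < 2 by rewrite ltnNge; apply/negP => /(no_dia2 al); apply.
  have k1 : k = 1 by have := Op'_valid dia_in; rewrite /=; lia.
  apply: steerable_leq (uniform_steerable (b := false) no_and (fun _ => no_dia2) g_in SD _)
    (leqnSn _).
  move=> q q_S; apply/negbTE; apply: contra dia_r2 => g_q.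
  by rewrite k1 card_gt0; apply/set0Pn; exists q; rewrite !inE q_S g_q.
- case=> _ g_in /subsetP /(_ t1 (r1_t1 al)); rewrite inE => g_t1.
  by have := sat_null t1_loop t1_unlab g_in; rewrite g_t1.
Qed.

End Deterministic.
End Semantics.

Lemma sum_exp2 m : (\sum_(i < m) 2 ^ i).+1 = 2 ^ m.
Proof. by elim: m => [|m IH]; rewrite ?big_ord0 // big_ord_recr /= -addSn IH expnS mul2n addnn. Qed.

Lemma sum_bits_increment (f g : nat -> bool) s m : s < m ->
  (forall i, i < s -> f i && ~~ g i) -> ~~ f s -> g s -> (forall i, s < i < m -> g i = f i) ->
  \sum_(i < m) g i * 2 ^ i = (\sum_(i < m) f i * 2 ^ i).+1.
Proof.
move=> + low_ones f_s g_s.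
have below j : j <= s ->
    \sum_(i < j) g i * 2 ^ i = 0 /\ (\sum_(i < j) f i * 2 ^ i).+1 = 2 ^ j.
  move=> le_js; rewrite -sum_exp2; split.
    by apply: big1 => i _; have /andP [_ /negbTE ->] := low_ones i (leq_trans (ltn_ord i) le_js).
  congr S; apply: eq_bigr => i _.
  by have /andP [-> _] := low_ones i (leq_trans (ltn_ord i) le_js); rewrite mul1n.
elim: m => // m IH; rewrite ltnS leq_eqVlt => /orP [/eqP <- | lt_sm] high_eq.
  have [sum_g sum_f] := below s (leqnn s).
  by rewrite !big_ord_recr /= sum_g (negbTE f_s) g_s -sum_f.
rewrite !big_ord_recr /= IH ?high_eq ?lt_sm ?ltnSn // => i /andP [lt_si lt_im].
by rewrite high_eq // lt_si ltnW.
Qed.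

Section Counter.
Variable n : nat.

Definition token := option (bool * nat).

Definition shift (al : act5) (p : nat) : nat :=
  match al with c_ => p.-1 | d_ => p.+1 | _ => p end.

Definition guard (al : act5) (k : bool) (p : nat) : bool :=
  match al with
  | b_ => (p <= n) ==> (k == (p < n))
  | c_ => 0 < p
  | d_ => p < n + n
  | _ => true
  end.

Definition next_bit (al : act5) (k : bool) (p : nat) : bool :=
  if (al == b_) && (p <= n) then p == n else k.

Definition step (s : token) (al : act5) : token :=
  if s is Some (k, p) then
    if guard al k p then Some (next_bit al k p, shift al p) else None
  else None.

Definition run (s : token) (w : seq act5) : token := foldl step s w.

Lemma run_cat s w1 w2 : run s (w1 ++ w2) = run (run s w1) w2.
Proof. exact: foldl_cat. Qed.

Lemma run_dead w : run None w = None.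
Proof. by elim: w. Qed.

Lemma run_nseq_c j k p : j <= p -> run (Some (k, p)) (nseq j c_) = Some (k, p - j).
Proof.
elim: j p => [|j IH] p le_jp /=; first by rewrite subn0.
by rewrite ifT ?IH /=; [congr (Some (_, _)) | |]; lia.
Qed.

Lemma run_nseq_d j k p : p + j <= n + n -> run (Some (k, p)) (nseq j d_) = Some (k, p + j).
Proof.
elim: j p => [|j IH] p le_pj /=; first by rewrite addn0.
by rewrite ifT ?IH /=; [congr (Some (_, _)) | |]; lia.
Qed.

Definition increment (s : nat) : seq act5 := nseq s c_ ++ b_ :: nseq s d_.

Lemma run_increment s i k : s <= n -> i <= n ->
  run (Some (k, n + i)) (increment s) =
  if (i <= s) ==> (k == (i < s)) then Some (if i <= s then i == s else k, n + i) else None.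
Proof.
move=> le_sn le_in; rewrite run_cat run_nseq_c; last lia.
rewrite /= /guard /next_bit /=.
have -> : (n + i - s <= n) = (i <= s) by lia.
have -> : (n + i - s < n) = (i < s) by lia.
have -> : (n + i - s == n) = (i == s) by lia.
case: ifP => _; last exact: run_dead.
by rewrite run_nseq_d; [congr (Some (_, _)) |]; lia.
Qed.

Fixpoint ruler (m : nat) : seq act5 :=
  if m is m'.+1 then ruler m' ++ increment m' ++ ruler m' else [::].

Lemma run_ruler_ge m i k : m <= i <= n -> run (Some (k, n + i)) (ruler m) = Some (k, n + i).
Proof.
elim: m => //= m IH /andP [lt_mi le_in].
have run_m : run (Some (k, n + i)) (ruler m) = Some (k, n + i) by apply: IH; lia.
rewrite 2!run_cat run_m run_increment; try lia.
by rewrite leqNgt lt_mi /= run_m.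
Qed.

Lemma run_ruler_lt m i :
  m <= n.+1 -> i < m -> run (Some (false, n + i)) (ruler m) = Some (true, n + i).
Proof.
elim: m => // m IH le_mn; rewrite ltnS leq_eqVlt => /orP [/eqP -> | lt_im] /=;
  rewrite 2!run_cat.
  by rewrite run_ruler_ge ?leqnn // run_increment // leqnn eqxx ltnn /= run_ruler_ge ?leqnn.
rewrite IH ?(ltnW le_mn) // run_increment; try lia.
by rewrite (ltnW lt_im) lt_im /= (ltn_eqF lt_im) IH ?(ltnW le_mn).
Qed.

Definition tok (i : nat) (w : seq act5) : token := run (Some (false, n + i)) w.

Definition bit (s : token) : bool := if s is Some (k, _) then k else false.

Definition value (w : seq act5) : nat := \sum_(i < n.+1) bit (tok i w) * 2 ^ i.

Definition alive (w : seq act5) : Prop := forall i, i <= n -> tok i w != None.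

Lemma tok_rcons i w al : tok i (rcons w al) = step (tok i w) al.
Proof. by rewrite /tok /run foldl_rcons. Qed.

Lemma alive_rcons w al : alive (rcons w al) -> alive w.
Proof. by move=> alive_wal i /alive_wal; rewrite tok_rcons; apply: contraNneq => ->. Qed.

Lemma step_alive k p al : step (Some (k, p)) al != None ->
  guard al k p /\ step (Some (k, p)) al = Some (next_bit al k p, shift al p).
Proof. by rewrite /=; case: ifP. Qed.

Lemma shiftD al t i : (al = c_ -> 0 < t) -> shift al (t + i) = shift al t + i.
Proof. by case: al => //= /(_ erefl); lia. Qed.

Lemma alive_offset w :
  alive w -> exists t, forall i, i <= n -> exists k, tok i w = Some (k, t + i).
Proof.
elim/last_ind: w => [_ | w al IH alive_wal]; first by exists n => i _; exists false.
have [t tok_w] := IH (alive_rcons alive_wal).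
have t_gt0 : al = c_ -> 0 < t.
  move=> al_c; have [k tok0] := tok_w 0 (leq0n n).
  by have := alive_wal 0 (leq0n n); rewrite tok_rcons tok0 al_c addn0 => /step_alive [].
exists (shift al t) => i le_in; have [k tok_i] := tok_w i le_in.
have := alive_wal i le_in; rewrite !tok_rcons tok_i => /step_alive [_ ->].
by exists (next_bit al k (t + i)); rewrite shiftD.
Qed.

Lemma value_rcons w al : alive (rcons w al) -> value (rcons w al) <= (value w).+1.
Proof.
move=> alive_wal; have [t tok_w] := alive_offset (alive_rcons alive_wal).
have bits i : i <= n -> guard al (bit (tok i w)) (t + i) /\
    bit (tok i (rcons w al)) = next_bit al (bit (tok i w)) (t + i).
  move=> le_in; have [k tok_i] := tok_w i le_in.
  by have := alive_wal i le_in; rewrite tok_rcons tok_i => /step_alive [? ->].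
have [/andP [/eqP al_b le_tn] | idle] := boolP ((al == b_) && (t <= n)); last first.
  rewrite (_ : value (rcons w al) = value w) //; apply: eq_bigr => i _.
  rewrite (bits i (ltn_ord i)).2 /next_bit; case: ifP => // /andP [al_b le_tin].
  by move: idle; rewrite al_b; lia.
have bits_b i : i <= n -> ((t + i <= n) ==> (bit (tok i w) == (t + i < n))) /\
    bit (tok i (rcons w al)) = (if t + i <= n then t + i == n else bit (tok i w)).
  by move=> /bits; rewrite al_b.
rewrite /value (@sum_bits_increment (fun i => bit (tok i w))
  (fun i => bit (tok i (rcons w al))) (n - t)) //.
- by rewrite ltnS leq_subr.
- move=> i lt_i; have lt_tin : t + i < n by lia.
  have [] := bits_b i; first lia.
  by rewrite (ltnW lt_tin) lt_tin (ltn_eqF lt_tin) => /eqP -> ->.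
- by have [] := bits_b (n - t) (leq_subr _ _); rewrite subnKC // leqnn ltnn => /eqP ->.
- by have [_ ->] := bits_b (n - t) (leq_subr _ _); rewrite subnKC // leqnn eqxx.
- move=> i /andP [lt_i le_in]; have [_ ->] := bits_b i le_in.
  by rewrite leqNgt (_ : n < t + i) //; lia.
Qed.

Lemma value_le_size w : alive w -> value w <= size w.
Proof.
elim/last_ind: w => [_ | w al IH alive_wal]; first by rewrite /value big1.
rewrite size_rcons (leq_trans (value_rcons alive_wal)) // ltnS.
exact: IH (alive_rcons alive_wal).
Qed.

Lemma counting_lower_bound w : (forall i, i <= n -> bit (tok i w)) -> 2 ^ n.+1 <= (size w).+1.
Proof.
move=> all_set; rewrite -sum_exp2 ltnS.
have <- : value w = \sum_(i < n.+1) 2 ^ i.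
  by apply: eq_bigr => i _; rewrite all_set ?mul1n // -ltnS.
by apply: value_le_size => i /all_set; case: (tok i w).
Qed.

Lemma tok_ruler i : i <= n -> tok i (ruler n.+1) = Some (true, n + i).
Proof. by move=> le_in; apply: run_ruler_lt. Qed.

End Counter.

Definition kripke_of N (I : {set 'I_N.+1}) (I_neq0 : I != set0)
    (dl : 'I_N.+1 -> act5 -> {set 'I_N.+1}) (lb : 'I_N.+1 -> bool) : kripke unit act5 :=
  @Kripke unit act5 N.+1 (ltn0Sn N) I I_neq0 predT (ex_intro _ a_ isT) dl
    (fun _ _ => ltac:(by [])) predT (fun q _ => lb q) (fun _ _ _ => isT).

(* [ord_max] is a sink satisfying no negation-free formula; [ord0] satisfies
   every diamond chain but sees that sink under every box. *)
Definition gadget (q0 : 'I_2) : kripke unit act5 :=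
  kripke_of (set1_neq0 q0) (fun q _ => if q == ord0 then setT else [set q]) (fun q => q == ord0).

Section CounterKripke.
Variable n : nat.

Definition npos := (n + n).+1.

(* State [k + 2p] is the live token [Some (k, p)], state [2 npos] the dead one,
   and the last state is a root whose successors are the initial tokens. *)
Definition encode (s : token) : nat := if s is Some (k, p) then k + p.*2 else npos.*2.

Definition decode (q : nat) : token := if q < npos.*2 then Some (odd q, q./2) else None.

Definition in_range (s : token) : bool := if s is Some (_, p) then p < npos else true.

Local Notation state := 'I_(npos.*2).+2.

Definition counter_next (q : state) (al : act5) : state := inord (encode (step n (decode q) al)).

Definition counter_root : state := ord_max.

Definition start (i : nat) : state := inord (encode (Some (false, n + i))).

Definition starts : {set state} := [set start i | i : 'I_n.+1].

Definition counter_delta (q : state) (al : act5) : {set state} :=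
  if q == counter_root then starts else [set counter_next q al].

(* Complementing the labels lets the same counter serve both polarities. *)
Definition counter_lab (flipped : bool) (q : state) : bool := flipped (+) bit (decode q).

Definition counter_kripke flipped (I : {set state}) (I_neq0 : I != set0) : kripke unit act5 :=
  kripke_of I_neq0 counter_delta (counter_lab flipped).

Lemma encode_le s : in_range s -> encode s <= npos.*2.
Proof. by case: s => [[k p]|] //=; rewrite -!mul2n; case: k => /=; lia. Qed.

Lemma encodeK s : in_range s -> decode (encode s) = s.
Proof.
case: s => [[k p]|] /= range_p; last by rewrite /decode ltnn.
rewrite /decode ifT ?oddD ?odd_double ?half_bit_double ?addbF ?oddb //.
by rewrite -!mul2n; case: k => /=; lia.
Qed.

Lemma decode_in_range q : in_range (decode q).
Proof.
rewrite /decode; case: ltnP => //= lt_q.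
by rewrite -ltn_double -[q in q < _]odd_double_half; lia.
Qed.

Lemma step_in_range s al : in_range s -> in_range (step n s al).
Proof.
case: s => [[k p]|] //= range_p; case: ifP => // guard_ok.
by case: al guard_ok => /=; rewrite /npos in range_p *; lia.
Qed.

Lemma run_in_range s w : in_range s -> in_range (run n s w).
Proof. by elim: w s => //= al w IH s range_s; apply/IH/step_in_range. Qed.

Lemma val_inord_encode s : in_range s -> (inord (encode s) : state) = encode s :> nat.
Proof. by move=> range_s; rewrite inordK // ltnS leqW // encode_le. Qed.

Lemma run_next s w :
  in_range s -> foldl counter_next (inord (encode s)) w = inord (encode (run n s w)).
Proof.
elim: w s => //= al w IH s range_s.
by rewrite -IH ?step_in_range // /counter_next val_inord_encode ?encodeK.
Qed.

Lemma start_in_range i : i <= n -> in_range (Some (false, n + i)).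
Proof. by rewrite /= /npos; lia. Qed.

Lemma lab_run_start flipped i w : i <= n ->
  counter_lab flipped (foldl counter_next (start i) w) = flipped (+) bit (tok n i w).
Proof.
move=> le_in; have range_i := start_in_range le_in.
by rewrite /start run_next // /counter_lab val_inord_encode ?encodeK ?run_in_range.
Qed.

Lemma counter_lab_root flipped : counter_lab flipped counter_root = flipped.
Proof. by rewrite /counter_lab /decode /= ltnNge leqnSn addbF. Qed.

Lemma lab_ruler_start flipped (I : {set state}) (I_neq0 : I != set0) i r : i <= n ->
  @lab _ _ (counter_kripke flipped I_neq0) (foldl counter_next (start i) (ruler n.+1)) r =
  ~~ flipped.
Proof. by move=> le_in; rewrite /= lab_run_start // tok_ruler // addbT. Qed.

Lemma encode_neq_root s : in_range s -> (inord (encode s) : state) != counter_root.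
Proof.
by move=> range_s; rewrite -val_eqE /= val_inord_encode // neq_ltn ltnS encode_le.
Qed.

Lemma next_neq_root q al : counter_next q al != counter_root.
Proof. exact/encode_neq_root/step_in_range/decode_in_range. Qed.

Lemma start_in i : i <= n -> start i \in starts.
Proof. by move=> le_in; apply/imsetP; exists (inord i) => //; rewrite inordK. Qed.

Lemma start_neq_root i : i <= n -> start i != counter_root.
Proof. by move=> /start_in_range /encode_neq_root. Qed.

Lemma starts_sub : {subset starts <= [pred q | q != counter_root]}.
Proof. by move=> _ /imsetP [i _ ->]; rewrite inE; apply: start_neq_root (ltn_ord i). Qed.

Lemma starts_neq0 : starts != set0.
Proof. by apply/set0Pn; exists (start 0); apply: start_in. Qed.

Lemma counter_delta_next q al :
  q != counter_root -> counter_delta q al = [set counter_next q al].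
Proof. by rewrite /counter_delta => /negbTE ->. Qed.

Lemma steerable_lower_bound flipped (I : {set state}) (I_neq0 : I != set0) m :
  steerable (K := counter_kripke flipped I_neq0) counter_next starts m (~~ flipped) ->
  2 ^ n.+1 <= m.+1.
Proof.
case=> w size_w [r lab_w]; rewrite -ltnS in size_w; apply: (leq_trans _ size_w).
apply: counting_lower_bound => i le_in; move: {lab_w}(lab_w _ (start_in le_in)).
by rewrite /= lab_run_start //; case: flipped; case: bit.
Qed.

End CounterKripke.

Lemma exp2_leq_expn m k e z : 0 < e -> 2 ^ m <= z -> k <= e * m -> 2 ^ k <= z ^ e.
Proof.
move=> e_gt0 le_z le_k; apply: leq_trans (leq_pexp2l (isT : 0 < 2) le_k) _.
by rewrite mulnC expnM leq_exp2r.
Qed.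

Lemma NoDup_pair (K1 K2 : kripke unit act5) : nst K1 != nst K2 -> NoDup [:: K1; K2].
Proof.
move=> neq_nst; constructor; last by constructor; [by [] | constructor].
by move=> [eq_K | []]; rewrite eq_K eqxx in neq_nst.
Qed.

Definition hard_sample (Op' : fragment unit act5) (n : nat)
    (Pos Neg : seq (kripke unit act5)) : Prop :=
  NoDup (Pos ++ Neg) /\ n <= total_states (Pos ++ Neg) /\
  (exists f, in_frag Op' f /\ separating Pos Neg f) /\
  (forall f, in_frag Op' f -> separating Pos Neg f -> 2 ^ total_states (Pos ++ Neg) <= sz f ^ 25).

Lemma hard_sample_intro Op' n (K1 K2 : kripke unit act5) :
  nst K1 != nst K2 -> n <= nst K1 + nst K2 <= 25 * n.+1 ->
  (exists f, in_frag Op' f /\ separating [:: K1] [:: K2] f) ->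
  (forall f, in_frag Op' f -> separating [:: K1] [:: K2] f -> 2 ^ n.+1 <= sz f) ->
  hard_sample Op' n [:: K1] [:: K2].
Proof.
move=> neq_nst /andP [ge_n le_n] sep lb; rewrite /hard_sample /total_states /= addn0.
split; first exact: NoDup_pair.
do 2!split => //; move=> f f_in /(lb f f_in) le_sz.
exact: exp2_leq_expn le_sz le_n.
Qed.

Lemma box_sample_hard Op' n :
  (forall o, Op' o -> valid_op o) -> ~ Op' (ONeg unit act5) -> Op' (OProp act5 tt) ->
  ~ Op' (OOr unit act5) -> (forall al, Op' (OBox unit al)) ->
  hard_sample Op' n [:: counter_kripke false (starts_neq0 n)] [:: gadget ord_max].
Proof.
move=> valid no_neg p_in no_or box_in.
pose KA := counter_kripke false (starts_neq0 n).
have det := @counter_delta_next n.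
have closed := fun q al (_ : q != counter_root n) => next_neq_root q al.
apply: hard_sample_intro; rewrite /= /npos -?mul2n; try lia.
- exists (box_chain tt (ruler n.+1)); split; first exact: box_chain_frag.
  split=> K [<- | []].
    move=> _ /imsetP [i _ ->]; have le_in : i <= n := ltn_ord i.
    by rewrite (sat_box_chain (K := KA) det closed) ?start_neq_root // lab_ruler_start.
  move=> /(_ ord_max (set11 _)); apply/negP; apply: (sat_null valid no_neg) => //.
  exact: box_chain_frag.
- move=> f f_in [pos _].
  have := uniform_steerable valid no_neg (K := KA) det closed (b := true) no_or ltac:(by [])
    f_in (@starts_sub n) (pos _ (or_introl erefl)).
  by move/steerable_lower_bound/leq_trans; apply; apply: height_lt_sz.
Qed.

Lemma dia_sample_hard Op' n :
  (forall o, Op' o -> valid_op o) -> ~ Op' (ONeg unit act5) -> Op' (OProp act5 tt) ->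
  ~ Op' (OAnd unit act5) -> (forall al k, 2 <= k -> ~ Op' (ODia unit al k)) ->
  (forall al, Op' (ODia unit al 1)) ->
  hard_sample Op' n [:: gadget ord0] [:: counter_kripke true (set1_neq0 (counter_root n))].
Proof.
move=> valid no_neg p_in no_and no_dia2 dia_in.
pose KB := counter_kripke true (set1_neq0 (counter_root n)).
have det := @counter_delta_next n.
have closed := fun q al (_ : q != counter_root n) => next_neq_root q al.
apply: hard_sample_intro; rewrite /= /npos -?mul2n; try lia.
- exists (dia_chain tt (a_ :: ruler n.+1)); split; first exact: dia_chain_frag.
  split=> K [<- | []].
    by move=> q /set1P ->; apply: sat_dia_chain_loop => [al|]; rewrite /= ?in_setT.
  move=> /(_ (counter_root n) (set11 _)); apply/negP; rewrite /= /counter_delta eqxx card_gt0.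
  apply/negP => /set0Pn [_ /setIP [/imsetP [i _ ->]]]; have le_in : i <= n := ltn_ord i.
  by rewrite inE (sat_dia_chain (K := KB) det closed) ?start_neq_root // lab_ruler_start.
- move=> f f_in [pos neg].
  have sat_r1 : @sat _ _ (gadget ord0) ord0 f by apply: (pos _ (or_introl erefl)); rewrite set11.
  have nsat_r2 : ~~ @sat _ _ KB (counter_root n) f.
    by apply/negP => sat_r2; apply: (neg _ (or_introl erefl)) => q /set1P ->.
  apply: leq_trans (height_lt_sz f).
  apply: (steerable_lower_bound (flipped := true) (I_neq0 := set1_neq0 (counter_root n))).
  apply: (@root_steerable _ _ _ valid no_neg KB _ _ det closed (gadget ord0) ord0 ord_max
    (counter_root n) (starts n) f no_and no_dia2) => //.
- by move=> al; rewrite /= in_setT.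
- by move=> r _; apply: counter_lab_root.
- by move=> al; rewrite /= /counter_delta eqxx.
- exact: starts_sub.
Qed.

Lemma monotone_fragment_cases (Op' : fragment unit act5) :
  monotone Op' ->
  ((forall al, Op' (OBox _ al)) \/ (forall al, Op' (ODia _ al 1))) ->
  (Op' (OAnd _ _) -> forall al, Op' (OBox _ al)) ->
  (Op' (OOr _ _) -> forall al, Op' (ODia _ al 1)) ->
  (~ Op' (OOr _ _) /\ forall al, Op' (OBox _ al)) \/
  (~ Op' (OAnd _ _) /\ forall al, Op' (ODia _ al 1)).
Proof.
move=> [_ not_both] box_or_dia and_box or_dia.
have [or_in | no_or] := classic (Op' (OOr _ _)).
  by right; split; [move=> and_in; apply: not_both | apply: or_dia].
have [and_in | no_and] := classic (Op' (OAnd _ _)); first by left; split; last exact: and_box.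
by case: box_or_dia; [left | right].
Qed.

Theorem proposition5 (Op' : fragment unit act5) :
  (forall o, Op' o -> valid_op o) ->
  monotone Op' ->
  Op' (OProp _ tt) ->
  (forall al k, 2 <= k -> ~ Op' (ODia _ al k)) ->
  ((forall al, Op' (OBox _ al)) \/ (forall al, Op' (ODia _ al 1))) ->
  (Op' (OAnd _ _) -> forall al, Op' (OBox _ al)) ->
  (Op' (OOr _ _) -> forall al, Op' (ODia _ al 1)) ->
  forall n : nat,
    exists Pos Neg : seq (kripke unit act5),
      NoDup (Pos ++ Neg) /\
      let k := total_states (Pos ++ Neg) in
      n <= k /\
      (exists f, in_frag Op' f /\ separating Pos Neg f) /\
      (forall f, in_frag Op' f -> separating Pos Neg f -> 2 ^ k <= sz f ^ 25).
Proof.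
move=> valid mono p_in no_dia2 box_or_dia and_box or_dia n.
have no_neg : ~ Op' (ONeg _ _) by case: mono.
case: (monotone_fragment_cases mono box_or_dia and_box or_dia) =>
  [[no_or box_in] | [no_and dia_in]].
  by eexists; eexists; apply: box_sample_hard.
by eexists; eexists; apply: dia_sample_hard.
Qed.
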